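(* Let $\sigma(x)=1/(1+e^{-x})$, let $a,\gamma_n^*,B_n\ge1$, $\beta_n>0$, $K_n,L,r,n\in\mathbb{N}$, and let $f_{\mathbf{w}}$ be the network described in the context. Let $(X_1,Y_1),\dots,(X_n,Y_n)\in\mathbb{R}^d\times\mathbb{R}$ with $X_i\in[-a,a]^d$ and $|Y_i|\le\beta_n$ ($i=1,\dots,n$), and let $F_n(\mathbf{w})=\frac1n\sum_{i=1}^n|Y_i-f_{\mathbf{w}}(X_i)|^2$. Assume $K_n\gamma_n^*\ge\beta_n$ and that the weight vectors $\mathbf{w}_1,\mathbf{w}_2$ satisfy $\max\{|(\mathbf{w}_1)^{(L)}_{1,1,k}|,|(\mathbf{w}_2)^{(L)}_{1,1,k}|\}\le\gamma_n^*$ for $k=1,\dots,K_n$ and $\max\{|(\mathbf{w}_1)^{(l)}_{k,i,j}|,|(\mathbf{w}_2)^{(l)}_{k,i,j}|\}\le B_n$ for all $k,i,j$ and $l=1,\dots,L-1$. Then there is a constant $c_{15}>0$ depending only on $d,L,r,a$ such that $$\|(\nabla_{\mathbf{w}}F_n)(\mathbf{w}_1)-(\nabla_{\mathbf{w}}F_n)(\mathbf{w}_2)\|\le c_{15}\,K_n^{3/2}B_n^{2L}(\gamma_n^* )^2\|\mathbf{w}_1-\mathbf{w}_2\|.$$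
   Context: For a weight vector $\mathbf{w}$, $f_{\mathbf{w}}(x)=\sum_{j=1}^{K_n}w^{(L)}_{1,1,j}f^{(L)}_{j,1}(x)$, where for $k\in\{1,\dots,K_n\}$, $i\in\{1,\dots,r\}$: $f^{(l)}_{k,i}(x)=\sigma\big(\sum_{j=1}^rw^{(l-1)}_{k,i,j}f^{(l-1)}_{k,j}(x)+w^{(l-1)}_{k,i,0}\big)$ for $l=2,\dots,L$ and $f^{(1)}_{k,i}(x)=\sigma\big(\sum_{j=1}^dw^{(0)}_{k,i,j}x^{(j)}+w^{(0)}_{k,i,0}\big)$. $\|\cdot\|$ is the Euclidean norm. *)

From HB Require Import structures.
From mathcomp Require Import all_boot all_order all_algebra.
From mathcomp Require Import all_classical all_reals all_analysis.
Set Implicit Arguments. Unset Strict Implicit. Unset Printing Implicit Defensive.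
Import Order.TTheory GRing.Theory Num.Theory.
Local Open Scope ring_scope.

Definition sigmoid (R : realType) (x : R) : R := 1 / (1 + expR (- x)).

(* Index set of the weight vector w.
   inl (k,i,j)           : w^{(0)}_{k+1,i+1,j},  j = 0..d   (j = 0 is the bias)
   inr (inl (l,k,i,j))   : w^{(l+1)}_{k+1,i+1,j}, l+1 = 1..L-1, j = 0..r
   inr (inr k)           : w^{(L)}_{1,1,k+1},   k+1 = 1..K *)
Definition widx (d L r K : nat) : finType :=
  ('I_K * 'I_r * 'I_d.+1 + ('I_L.-1 * 'I_K * 'I_r * 'I_r.+1 + 'I_K))%type.

Section Net.
Variables (R : realType) (d L r K : nat).
Implicit Types (w : widx d L r K -> R) (x : 'I_d -> R).

Definition w_in w (k : 'I_K) (i : 'I_r) (j : 'I_d.+1) : R := w (inl (k, i, j)).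
Definition w_mid w (l : 'I_L.-1) (k : 'I_K) (i : 'I_r) (j : 'I_r.+1) : R :=
  w (inr (inl (l, k, i, j))).
Definition w_out w (k : 'I_K) : R := w (inr (inr k)).

(* w^{(m)} for middle layer m (1 <= m <= L-1); 0 outside that range (never used) *)
Definition w_layer w (m : nat) (k : 'I_K) (i : 'I_r) (j : 'I_r.+1) : R :=
  if insub m.-1 is Some l then w_mid w l k i j else 0.

(* hidden m w x k i = f^{(m+1)}_{k+1,i+1}(x) *)
Fixpoint hidden (m : nat) w x (k : 'I_K) (i : 'I_r) : R :=
  match m with
  | 0 => sigmoid (\sum_(j < d) w_in w k i (lift ord0 j) * x j + w_in w k i ord0)
  | m'.+1 => sigmoid (\sum_(j < r) w_layer w m k i (lift ord0 j) * hidden m' w x k j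
                      + w_layer w m k i ord0)
  end.

Definition net (hr : (0 < r)%N) w x : R :=
  \sum_(k < K) w_out w k * hidden L.-1 w x k (Ordinal hr).

Definition risk (n : nat) (hr : (0 < r)%N) (X : 'I_n -> 'I_d -> R) (Y : 'I_n -> R) w : R :=
  n%:R^-1 * \sum_(i < n) (Y i - net hr w (X i)) ^+ 2.

End Net.

Definition wupd (R : realType) (T : finType) (w : T -> R) (e : T) (t : R) : T -> R :=
  fun e' => if e' == e then w e' + t else w e'.

Definition grad (R : realType) (T : finType) (F : (T -> R) -> R) (w : T -> R) : T -> R :=
  fun e => derive1 (fun t : R => F (wupd w e t)) 0.

Definition enorm (R : realType) (T : finType) (v : T -> R) : R :=
  Num.sqrt (\sum_(e : T) v e ^+ 2).

From HB Require Import structures.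
From mathcomp Require Import all_boot all_order all_algebra.
From mathcomp Require Import all_classical all_reals all_analysis.
From mathcomp Require Import ring lra zify.
Set Implicit Arguments. Unset Strict Implicit. Unset Printing Implicit Defensive.
Import Order.TTheory GRing.Theory Num.Theory.
Local Open Scope ring_scope.

(* The partial derivatives of F_n are computed by forward-mode differentiation
   through the layers.  Since sigma and sigma' = sigma (1 - sigma) are bounded
   by 1 and 1-Lipschitz, induction over the layers shows that the hidden
   neurons, their partial derivatives, and the differences of both between w1
   and w2 grow by a factor O(B) per layer, the differences being proportional
   to delta = ||w1 - w2||.  A partial derivative of f_w only involves the
   sub-network k containing the weight, so every coordinate of the gradient
   difference is O(K gamma^2 B^(2L) delta); summing the squares of the O(K)
   coordinates gives the factor K^(3/2). *)

Section RealBounds.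
Variable R : numFieldType.
Implicit Types (a b c : R) (n : nat).

Lemma norm_bool_le1 (b : bool) : `|b%:R : R| <= 1.
Proof. by case: b; rewrite ?normr1 ?normr0. Qed.

Lemma norm_mul_le1l a b c : `|a| <= 1 -> `|b| <= c -> `|a * b| <= c.
Proof. by move=> a1 bc; rewrite normrM -[c]mul1r ler_pM. Qed.

Lemma norm_sum_le n (F : 'I_n -> R) c :
  (forall j, `|F j| <= c) -> `|\sum_(j < n) F j| <= n%:R * c.
Proof.
move=> Fc; apply: le_trans (ler_norm_sum _ _ _) _.
apply: le_trans (ler_sum _ (fun j _ => Fc j)) _.
by rewrite sumr_const card_ord mulr_natl.
Qed.

Lemma norm_affine_le n (F : 'I_n -> R) b c c' :
  (forall j, `|F j| <= c) -> `|b| <= c' -> `|\sum_(j < n) F j + b| <= n%:R * c + c'.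
Proof. by move=> Fc bc'; apply: le_trans (ler_normD _ _) _; apply: lerD (norm_sum_le Fc) bc'. Qed.

Lemma dist_affine_le n (F G : 'I_n -> R) b1 b2 c c' :
  (forall j, `|F j - G j| <= c) -> `|b1 - b2| <= c' ->
  `|(\sum_(j < n) F j + b1) - (\sum_(j < n) G j + b2)| <= n%:R * c + c'.
Proof. by move=> FGc bc'; rewrite opprD addrACA -sumrB norm_affine_le. Qed.

Lemma dist_mul_le a1 a2 b1 b2 :
  `|a1 * b1 - a2 * b2| <= `|a1 - a2| * `|b1| + `|a2| * `|b1 - b2|.
Proof.
have -> : a1 * b1 - a2 * b2 = (a1 - a2) * b1 + a2 * (b1 - b2) by ring.
by rewrite -!normrM ler_normD.
Qed.

Lemma dist_mean_le n (F G : 'I_n -> R) c : (0 < n)%N ->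
  (forall i, `|F i - G i| <= c) ->
  `|n%:R^-1 * \sum_(i < n) F i - n%:R^-1 * \sum_(i < n) G i| <= c.
Proof.
move=> n0 FGc; rewrite -mulrBr -sumrB normrM ger0_norm ?invr_ge0 //.
by rewrite ler_pdivrMl ?ltr0n // norm_sum_le.
Qed.

End RealBounds.


Section Sigmoid.
Variable R : realType.
Implicit Types a b z : R.

Definition dsigmoid z : R := sigmoid z * (1 - sigmoid z).

Lemma sigmoid_gt0 z : 0 < sigmoid z.
Proof. by rewrite /sigmoid div1r invr_gt0 ltr_wpDr ?expR_ge0. Qed.

Lemma sigmoid_lt1 z : sigmoid z < 1.
Proof.
have h : 1 < 1 + expR (- z) by rewrite ltrDl expR_gt0.
by rewrite /sigmoid div1r invf_lt1 //; apply: lt_trans h.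
Qed.

Lemma norm_sigmoid_le1 z : `|sigmoid z| <= 1.
Proof. by rewrite ger0_norm ?ltW ?sigmoid_gt0 ?sigmoid_lt1. Qed.

Lemma norm_dsigmoid_le1 z : `|dsigmoid z| <= 1.
Proof.
have := sigmoid_gt0 z; have := sigmoid_lt1 z.
rewrite ler_norml /dsigmoid => *; apply/andP; split; nra.
Qed.

Lemma is_derive_sigmoid z : is_derive z 1 (@sigmoid R) (dsigmoid z).
Proof.
have e0 : 1 + expR (- z) != 0 by rewrite gt_eqF // ltr_wpDr ?expR_ge0.
have Hden : is_derive z 1 (fun y : R => 1 + expR (- y)) (- expR (- z)).
  by apply: is_derive_eq; rewrite add0r mul1r mulrN1.
have -> : @sigmoid R = (fun y : R => (1 + expR (- y))^-1).
  by apply/funext => y; rewrite /sigmoid div1r.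
apply: is_derive_eq (is_deriveV (f := fun y => 1 + expR (- y)) e0 Hden) _.
by rewrite /dsigmoid /sigmoid /GRing.scale /=; field.
Qed.

Lemma dist_sigmoid_le a b : `|sigmoid a - sigmoid b| <= `|a - b|.
Proof.
wlog ab : a b / a <= b.
  by move=> H; case: (leP a b) => [/H //|/ltW /H]; rewrite distrC (distrC a).
rewrite distrC (distrC a).
have [|c _ ->] := MVT_segment ab (fun y _ => is_derive_sigmoid y).
  by apply: derivable_within_continuous => y _; case: (is_derive_sigmoid y).
by rewrite normrM ler_piMl // norm_dsigmoid_le1.
Qed.

Lemma dist_dsigmoid_le a b : `|dsigmoid a - dsigmoid b| <= `|a - b|.
Proof.
have -> : dsigmoid a - dsigmoid b =
          (sigmoid a - sigmoid b) * (1 - sigmoid a - sigmoid b).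
  by rewrite /dsigmoid; ring.
rewrite normrM; apply: le_trans (dist_sigmoid_le a b); apply: ler_piMr => //.
have := sigmoid_gt0 a; have := sigmoid_gt0 b.
have := sigmoid_lt1 a; have := sigmoid_lt1 b.
by rewrite ler_norml => *; apply/andP; split; lra.
Qed.

Lemma dist_dsigmoid_mul_le (z1 z2 S1 S2 : R) :
  `|dsigmoid z1 * S1 - dsigmoid z2 * S2| <= `|z1 - z2| * `|S1| + `|S1 - S2|.
Proof.
apply: le_trans (dist_mul_le _ _ _ _) (lerD _ _).
  by rewrite ler_wpM2r ?dist_dsigmoid_le.
by rewrite ler_piMl ?norm_dsigmoid_le1.
Qed.

End Sigmoid.

Lemma is_derive_sum_fun (R : realType) n (h : 'I_n -> R -> R) (dh : 'I_n -> R) (x : R) :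
  (forall i, is_derive x 1 (h i) (dh i)) ->
  is_derive x 1 (fun t => \sum_(i < n) h i t) (\sum_(i < n) dh i).
Proof. by move=> H; have := is_derive_sum H; rewrite fct_sumE. Qed.

Section Gradient.
Variables (R : realType) (d L r K : nat).
Local Notation W := (widx d L r K).
Implicit Types (w : W -> R) (x : 'I_d -> R) (e : W).

Definition preact_in w x k i : R :=
  \sum_(j < d) w_in w k i (lift ord0 j) * x j + w_in w k i ord0.
Definition preact m w x k i : R :=
  \sum_(j < r) w_layer w m.+1 k i (lift ord0 j) * hidden m w x k j
  + w_layer w m.+1 k i ord0.

Lemma hidden0 w x k i : hidden 0 w x k i = sigmoid (preact_in w x k i).
Proof. by []. Qed.

Lemma hiddenS m w x k i : hidden m.+1 w x k i = sigmoid (preact m w x k i).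
Proof. by []. Qed.

(* The prefix [d] denotes the partial derivative with respect to the weight [e]. *)
Definition dw_in e k i j : R := ((inl (k, i, j) : W) == e)%:R.
Definition dw_layer e m k i j : R :=
  if insub m.-1 is Some l then ((inr (inl (l, k, i, j)) : W) == e)%:R else 0.
Definition dw_out e k : R := ((inr (inr k) : W) == e)%:R.

Definition dpreact_in x e k i : R :=
  \sum_(j < d) dw_in e k i (lift ord0 j) * x j + dw_in e k i ord0.

Fixpoint dhidden m w x e k i : R :=
  match m with
  | 0 => dsigmoid (preact_in w x k i) * dpreact_in x e k i
  | m'.+1 => dsigmoid (preact m' w x k i) *
      (\sum_(j < r) (dw_layer e m k i (lift ord0 j) * hidden m' w x k j
                     + w_layer w m k i (lift ord0 j) * dhidden m' w x e k j)
       + dw_layer e m k i ord0)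
  end.

Definition dpreact m w x e k i : R :=
  \sum_(j < r) (dw_layer e m.+1 k i (lift ord0 j) * hidden m w x k j
                + w_layer w m.+1 k i (lift ord0 j) * dhidden m w x e k j)
  + dw_layer e m.+1 k i ord0.

Lemma dhidden0 w x e k i :
  dhidden 0 w x e k i = dsigmoid (preact_in w x k i) * dpreact_in x e k i.
Proof. by []. Qed.

Lemma dhiddenS m w x e k i :
  dhidden m.+1 w x e k i = dsigmoid (preact m w x k i) * dpreact m w x e k i.
Proof. by []. Qed.

Lemma wupd0 w e : wupd w e 0 = w.
Proof. by apply/funext => e'; rewrite /wupd; case: eqP; rewrite ?addr0. Qed.

Lemma is_derive_wupd w e e' :
  is_derive (0 : R) 1 (fun t => wupd w e t e') (e' == e)%:R.
Proof.
rewrite /wupd; case: eqP => _; last exact: is_derive_cst.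
by apply: is_derive_eq; rewrite add0r mul1r.
Qed.

Lemma is_derive_w_layer w e m k i j :
  is_derive (0 : R) 1 (fun t => w_layer (wupd w e t) m k i j) (dw_layer e m k i j).
Proof.
rewrite /w_layer /dw_layer; case: insub => [l|]; last exact: is_derive_cst.
exact: is_derive_wupd.
Qed.

Lemma is_derive_sigmoid_comp (f : R -> R) df :
  is_derive (0 : R) 1 f df ->
  is_derive (0 : R) 1 (fun t => sigmoid (f t)) (dsigmoid (f 0) * df).
Proof. exact: is_derive1_comp (is_derive_sigmoid _). Qed.

Lemma is_derive_preact_in w x e k i :
  is_derive (0 : R) 1 (fun t => preact_in (wupd w e t) x k i) (dpreact_in x e k i).
Proof.
apply: is_deriveD; last exact: is_derive_wupd.
apply: is_derive_sum_fun => j; apply: is_derive_eq.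
  exact: is_deriveM (is_derive_wupd _ _ _) (is_derive_cst _ _ _).
by rewrite /dw_in /GRing.scale /= mulr0 add0r mulrC.
Qed.

Lemma is_derive_preact w x e m k i :
  (forall j, is_derive (0 : R) 1 (fun t => hidden m (wupd w e t) x k j)
                       (dhidden m w x e k j)) ->
  is_derive (0 : R) 1 (fun t => preact m (wupd w e t) x k i) (dpreact m w x e k i).
Proof.
move=> dh; apply: is_deriveD; last exact: is_derive_w_layer.
apply: is_derive_sum_fun => j; apply: is_derive_eq.
  exact: is_deriveM (is_derive_w_layer _ _ _ _ _ _) (dh j).
by rewrite /GRing.scale /= wupd0 addrC mulrC.
Qed.

Lemma is_derive_hidden w x e m k i :
  is_derive (0 : R) 1 (fun t => hidden m (wupd w e t) x k i) (dhidden m w x e k i).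
Proof.
elim: m i => [|m IH] i.
  by have := is_derive_sigmoid_comp (is_derive_preact_in w x e k i); rewrite wupd0.
by have := is_derive_sigmoid_comp (is_derive_preact i IH); rewrite wupd0.
Qed.

Variable hr : (0 < r)%N.
Local Notation o := (Ordinal hr).

Definition dnet w x e : R :=
  \sum_(k < K) (w_out w k * dhidden L.-1 w x e k o + hidden L.-1 w x k o * dw_out e k).

Lemma is_derive_net w x e :
  is_derive (0 : R) 1 (fun t => net hr (wupd w e t) x) (dnet w x e).
Proof.
apply: is_derive_sum_fun => k; apply: is_derive_eq.
  exact: is_deriveM (is_derive_wupd _ _ _) (is_derive_hidden _ _ _ _ _ _).
by rewrite /GRing.scale /= wupd0.
Qed.

Definition grad_risk n (X : 'I_n -> 'I_d -> R) (Y : 'I_n -> R) w e : R :=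
  n%:R^-1 * \sum_(i < n) 2 * ((net hr w (X i) - Y i) * dnet w (X i) e).

Lemma gradE n (X : 'I_n -> 'I_d -> R) (Y : 'I_n -> R) w e :
  grad (risk hr X Y) w e = grad_risk X Y w e.
Proof.
suff : is_derive (0 : R) 1 (fun t => risk hr X Y (wupd w e t)) (grad_risk X Y w e).
  by rewrite /grad derive1E; case.
have dres i := is_deriveB (is_derive_cst (Y i) (0 : R) 1) (is_derive_net w (X i) e).
apply: is_derive_eq.
  apply: is_deriveM (is_derive_cst _ _ _) _.
  by apply: is_derive_sum_fun => i; exact: is_deriveX (dres i).
rewrite /grad_risk /GRing.scale /= mulr0 addr0 wupd0; congr (_ * _).
by apply: eq_bigr => i _; ring.
Qed.

End Gradient.

Arguments dw_in {R d L r K}.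
Arguments dw_layer {R d L r K}.
Arguments dw_out {R d L r K}.

Section Locality.
Variables (R : realType) (d L r K : nat).
Local Notation W := (widx d L r K).
Implicit Types (w : W -> R) (x : 'I_d -> R) (e : W).

Definition block_of e : 'I_K :=
  match e with inl p => p.1.1 | inr (inl p) => p.1.1.2 | inr (inr k) => k end.

Lemma eq_block_ofF e e' : block_of e != block_of e' -> (e' == e) = false.
Proof. by apply: contraNF => /eqP ->. Qed.

Lemma dw_layer_eq0 e m k i j : block_of e != k -> dw_layer e m k i j = 0 :> R.
Proof. by move=> ek; rewrite /dw_layer; case: insub => // l; rewrite eq_block_ofF. Qed.

Lemma dhidden_eq0 w x e m k i : block_of e != k -> dhidden m w x e k i = 0.
Proof.
move=> ek; elim: m i => [|m IH] i.
  rewrite dhidden0 /dpreact_in /dw_in eq_block_ofF // big1 ?addr0 ?mulr0 // => j _.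
  by rewrite eq_block_ofF ?mul0r.
rewrite dhiddenS /dpreact dw_layer_eq0 // big1 ?addr0 ?mulr0 // => j _.
by rewrite dw_layer_eq0 // IH !mulr0 addr0 mul0r.
Qed.

Variable hr : (0 < r)%N.
Local Notation o := (Ordinal hr).

Lemma dnetE w x e : dnet hr w x e =
  w_out w (block_of e) * dhidden L.-1 w x e (block_of e) o
  + hidden L.-1 w x (block_of e) o * dw_out e (block_of e).
Proof.
rewrite /dnet (bigD1 (block_of e)) //= big1 ?addr0 // => k ke.
by rewrite dhidden_eq0 1?eq_sym // /dw_out eq_block_ofF 1?eq_sym // !mulr0 addr0.
Qed.

End Locality.

Section Constants.
Variables (R : realType) (d r : nat) (a B : R).
Hypotheses (ha : 1 <= a) (hB : 1 <= B).

(* [Cm m * B ^+ m] bounds both the partial derivatives of [hidden m] and its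
   Lipschitz constant in the weights; [Em m * B ^+ (2 * m)] is a Lipschitz
   constant of its partial derivatives. *)
Fixpoint Cm m : R := if m is m'.+1 then r%:R + 1 + r%:R * Cm m' else a * d.+1%:R.
Fixpoint Em m : R :=
  if m is m'.+1 then Cm m ^+ 2 + r%:R * (2 * Cm m' + Em m') else Cm 0 ^+ 2.

Lemma Cm_ge0 m : 0 <= Cm m.
Proof.
elim: m => [|m IH] /=; first by rewrite mulr_ge0 // (le_trans ler01 ha).
by rewrite addr_ge0 ?mulr_ge0 ?addr_ge0.
Qed.

Lemma Em_ge0 m : 0 <= Em m.
Proof.
elim: m => [|m IH] /=; first by rewrite sqr_ge0.
by rewrite addr_ge0 ?sqr_ge0 ?mulr_ge0 ?addr_ge0 ?mulr_ge0 ?Cm_ge0.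
Qed.

Lemma Cm_step m c : 0 <= c ->
  r%:R * (c + B * (Cm m * B ^+ m * c)) + c <= Cm m.+1 * B ^+ m.+1 * c.
Proof.
move=> c0; have P1 := exprn_ege1 m.+1 hB; have C0 := Cm_ge0 m.
have cP : c <= B ^+ m.+1 * c by rewrite ler_peMl.
have rcP : r%:R * c <= r%:R * (B ^+ m.+1 * c) by rewrite ler_wpM2l.
rewrite /= exprS in cP rcP *; lra.
Qed.

Lemma Em_step m c : 0 <= c ->
  Cm m.+1 * B ^+ m.+1 * c * (Cm m.+1 * B ^+ m.+1)
  + r%:R * (Cm m * B ^+ m * c + (c * (Cm m * B ^+ m) + B * (Em m * B ^+ (2 * m) * c)))
  <= Em m.+1 * B ^+ (2 * m.+1) * c.
Proof.
move=> c0; have C0 := Cm_ge0 m; have E0 := Em_ge0 m.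
have P1 := exprn_ege1 m hB; have B0 : 0 <= B by apply: le_trans hB.
set P := B ^+ m in P1 *; set Q := B ^+ (2 * m.+1).
have EQ : B ^+ m.+1 * B ^+ m.+1 = Q by rewrite -exprD addnn -mul2n.
have PQ : P <= Q.
  by rewrite /Q /P ler_weXn2l //; lia.
have BPPQ : B * (P * P) <= Q.
  have BP : P <= B * P by rewrite ler_peMl // (le_trans ler01 P1).
  rewrite -EQ exprS -/P; nra.
have -> : Em m.+1 * Q * c = Cm m.+1 ^+ 2 * Q * c + r%:R * ((2 * Cm m + Em m) * Q * c).
  by rewrite /=; ring.
rewrite -EQ; apply: lerD; first lra.
rewrite ler_wpM2l // EQ.
have -> : Cm m * P * c + (c * (Cm m * P) + B * (Em m * B ^+ (2 * m) * c)) =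
          2 * Cm m * P * c + Em m * (B * (P * P)) * c.
  by rewrite mulnC exprM /P; ring.
rewrite [X in _ <= X](_ : _ = 2 * Cm m * Q * c + Em m * Q * c); last by ring.
by apply: lerD; rewrite ler_wpM2r // ler_wpM2l // mulr_ge0.
Qed.

End Constants.

Section LayerBounds.
Variables (R : realType) (d L r K : nat) (a B delta : R).
Local Notation W := (widx d L r K).
Local Notation C := (Cm d r a).
Local Notation E := (Em d r a).
Hypotheses (ha : 1 <= a) (hB : 1 <= B) (hdelta : 0 <= delta).
Variables (w1 w2 : W -> R) (x : 'I_d -> R).
Hypotheses (hx : forall j, `|x j| <= a)
  (hw : forall e, `|w1 e - w2 e| <= delta)
  (hw1 : forall l k i j, `|w_mid w1 l k i j| <= B)
  (hw2 : forall l k i j, `|w_mid w2 l k i j| <= B).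
Implicit Types (w : W -> R) (e : W).

Lemma norm_w_layer_le w : (forall l k i j, `|w_mid w l k i j| <= B) ->
  forall m k i j, `|w_layer w m k i j| <= B.
Proof.
move=> hwB m k i j; rewrite /w_layer; case: insub => [l|]; first exact: hwB.
by rewrite normr0 (le_trans ler01 hB).
Qed.

Lemma dist_w_layer_le m k i j : `|w_layer w1 m k i j - w_layer w2 m k i j| <= delta.
Proof. by rewrite /w_layer; case: insub => [l|]; rewrite ?hw // subrr normr0. Qed.

Lemma norm_dw_layer_le1 e m k i j : `|dw_layer e m k i j : R| <= 1.
Proof. by rewrite /dw_layer; case: insub => [l|]; rewrite ?norm_bool_le1 ?normr0. Qed.

Lemma norm_hidden_le1 w m k i : `|hidden m w x k i| <= 1.
Proof. by case: m => [|m]; rewrite ?hidden0 ?hiddenS norm_sigmoid_le1. Qed.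

Lemma dist_preact_in_le k i :
  `|preact_in w1 x k i - preact_in w2 x k i| <= C 0 * delta.
Proof.
rewrite /preact_in; apply: le_trans (dist_affine_le (c := delta * a) _ (hw _)) _.
  by move=> j; rewrite -mulrBl normrM ler_pM //; apply: hw.
have a1 : 0 <= (a - 1) * delta by rewrite mulr_ge0 // subr_ge0.
rewrite /= -natr1; lra.
Qed.

Lemma dist_preact_le m k i c :
  (forall j, `|hidden m w1 x k j - hidden m w2 x k j| <= c) ->
  `|preact m w1 x k i - preact m w2 x k i| <= r%:R * (delta + B * c) + delta.
Proof.
move=> hc; apply: dist_affine_le (dist_w_layer_le _ _ _ _) => j /=.
apply: le_trans (dist_mul_le _ _ _ _) (lerD _ _).
  by rewrite -[X in _ <= X]mulr1 ler_pM ?dist_w_layer_le ?norm_hidden_le1.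
by rewrite ler_pM ?(norm_w_layer_le hw2).
Qed.

Lemma dist_hidden_le m k i :
  `|hidden m w1 x k i - hidden m w2 x k i| <= C m * B ^+ m * delta.
Proof.
elim: m i => [|m IH] i.
  by rewrite !hidden0 expr0 mulr1; apply: le_trans (dist_sigmoid_le _ _) (dist_preact_in_le _ _).
rewrite !hiddenS; apply: le_trans (dist_sigmoid_le _ _) _.
exact: le_trans (dist_preact_le _ IH) (Cm_step d r ha hB _ hdelta).
Qed.

Lemma norm_dpreact_in_le e k i : `|dpreact_in x e k i| <= C 0.
Proof.
rewrite /dpreact_in /dw_in.
apply: le_trans (norm_affine_le (c := a) (c' := 1) _ _) _.
- by move=> j; rewrite normrM -[a]mul1r ler_pM ?norm_bool_le1.
- exact: norm_bool_le1.
- by rewrite /= -natr1 mulrDr mulr1 mulrC lerD2l.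
Qed.

Lemma norm_dpreact_le w : (forall l k i j, `|w_mid w l k i j| <= B) ->
  forall e m k i, (forall j, `|dhidden m w x e k j| <= C m * B ^+ m) ->
  `|dpreact m w x e k i| <= C m.+1 * B ^+ m.+1.
Proof.
move=> hwB e m k i hdh.
have := Cm_step d r ha hB m ler01; rewrite !mulr1; apply: le_trans.
apply: norm_affine_le (norm_dw_layer_le1 _ _ _ _ _) => j /=.
apply: le_trans (ler_normD _ _) (lerD _ _).
  by rewrite norm_mul_le1l ?norm_dw_layer_le1 ?norm_hidden_le1.
by rewrite normrM ler_pM ?(norm_w_layer_le hwB).
Qed.

Lemma norm_dhidden_le w : (forall l k i j, `|w_mid w l k i j| <= B) ->
  forall e m k i, `|dhidden m w x e k i| <= C m * B ^+ m.
Proof.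
move=> hwB e; elim=> [|m IH] k i.
  by rewrite dhidden0 expr0 mulr1 norm_mul_le1l ?norm_dsigmoid_le1 ?norm_dpreact_in_le.
by rewrite dhiddenS norm_mul_le1l ?norm_dsigmoid_le1 ?norm_dpreact_le.
Qed.

Lemma dist_dpreact_le e m k i c :
  (forall j, `|dhidden m w1 x e k j - dhidden m w2 x e k j| <= c) ->
  `|dpreact m w1 x e k i - dpreact m w2 x e k i| <=
    r%:R * (C m * B ^+ m * delta + (delta * (C m * B ^+ m) + B * c)).
Proof.
move=> hc; rewrite -[X in _ <= X]addr0.
apply: dist_affine_le; last by rewrite subrr normr0.
move=> j; rewrite opprD addrACA -mulrBr.
apply: le_trans (ler_normD _ _) (lerD _ (le_trans (dist_mul_le _ _ _ _) (lerD _ _))).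
- by rewrite norm_mul_le1l ?norm_dw_layer_le1 ?dist_hidden_le.
- by rewrite ler_pM ?dist_w_layer_le ?(norm_dhidden_le hw1).
- by rewrite ler_pM ?(norm_w_layer_le hw2).
Qed.

Lemma dist_dhidden_le e m k i :
  `|dhidden m w1 x e k i - dhidden m w2 x e k i| <= E m * B ^+ (2 * m) * delta.
Proof.
elim: m i => [|m IH] i.
  rewrite !dhidden0; apply: le_trans (dist_dsigmoid_mul_le _ _ _ _) _.
  have -> : E 0 = C 0 * C 0 by rewrite /= expr2.
  rewrite subrr normr0 addr0 muln0 expr0 mulr1 mulrAC.
  by rewrite ler_pM ?Cm_ge0 ?dist_preact_in_le ?norm_dpreact_in_le.
rewrite !dhiddenS; apply: le_trans (dist_dsigmoid_mul_le _ _ _ _) _.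
apply: le_trans (Em_step d r ha hB m hdelta); apply: lerD.
  apply: ler_pM => //.
    apply: le_trans (Cm_step d r ha hB m hdelta).
    by apply: dist_preact_le => j; apply: dist_hidden_le.
  by apply: norm_dpreact_le => // j; apply: norm_dhidden_le.
exact: dist_dpreact_le.
Qed.

End LayerBounds.

Section NetworkBounds.
Variables (R : realType) (d L r K : nat) (hr : (0 < r)%N) (a B gamma delta : R).
Local Notation W := (widx d L r K).
Local Notation o := (Ordinal hr).
Local Notation C := (Cm d r a L.-1).
Local Notation E := (Em d r a L.-1).
Local Notation P := (B ^+ L.-1).
Hypotheses (ha : 1 <= a) (hB : 1 <= B) (hgamma : 1 <= gamma) (hdelta : 0 <= delta).
Variables (w1 w2 : W -> R) (x : 'I_d -> R).
Hypotheses (hx : forall j, `|x j| <= a)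
  (hw : forall e, `|w1 e - w2 e| <= delta)
  (hw1 : forall l k i j, `|w_mid w1 l k i j| <= B)
  (hw2 : forall l k i j, `|w_mid w2 l k i j| <= B)
  (ho2 : forall k, `|w_out w2 k| <= gamma).
Implicit Types (w : W -> R) (e : W).

Let C0 : 0 <= C := Cm_ge0 d r ha L.-1.
Let gamma0 : 0 <= gamma := le_trans ler01 hgamma.
Let P1 : 1 <= P := exprn_ege1 L.-1 hB.
Let gammaP1 : 1 <= gamma * P.
Proof. by rewrite -[1]mulr1 ler_pM. Qed.

Lemma norm_net_le w : (forall k, `|w_out w k| <= gamma) -> `|net hr w x| <= K%:R * gamma.
Proof.
move=> ho; apply: norm_sum_le => k.
by rewrite normrM -[gamma]mulr1 ler_pM ?ho ?norm_hidden_le1.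
Qed.

Lemma dist_net_le :
  `|net hr w1 x - net hr w2 x| <= K%:R * ((1 + C) * gamma * P * delta).
Proof.
rewrite /net -sumrB; apply: norm_sum_le => k.
apply: le_trans (dist_mul_le _ _ _ _) _.
have h1 : `|w_out w1 k - w_out w2 k| * `|hidden L.-1 w1 x k o| <= delta.
  by rewrite -[delta]mulr1 ler_pM ?norm_hidden_le1 //; apply: hw.
have h2 : `|w_out w2 k| * `|hidden L.-1 w1 x k o - hidden L.-1 w2 x k o|
          <= gamma * (C * P * delta).
  by rewrite ler_pM ?(dist_hidden_le ha hB hdelta hx hw hw2).
have : delta <= gamma * P * delta by rewrite ler_peMl.
by have := gammaP1; lra.
Qed.

Lemma norm_dnet_le w : (forall l k i j, `|w_mid w l k i j| <= B) ->
  (forall k, `|w_out w k| <= gamma) -> forall e,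
  `|dnet hr w x e| <= (1 + C) * gamma * P.
Proof.
move=> hwB ho e; rewrite dnetE; apply: le_trans (ler_normD _ _) _.
have h1 : `|w_out w (block_of e) * dhidden L.-1 w x e (block_of e) o| <= gamma * (C * P).
  by rewrite normrM ler_pM ?ho ?(norm_dhidden_le ha hB hx hwB).
have h2 : `|hidden L.-1 w x (block_of e) o * dw_out e (block_of e)| <= 1.
  by rewrite mulrC norm_mul_le1l ?norm_bool_le1 ?norm_hidden_le1.
by have := gammaP1; lra.
Qed.

Lemma dist_dnet_le e :
  `|dnet hr w1 x e - dnet hr w2 x e| <= (2 * C + E) * gamma * P ^+ 2 * delta.
Proof.
rewrite !dnetE opprD addrACA -mulrBl.
apply: le_trans (ler_normD _ _) _.
have h1 := dist_mul_le (w_out w1 (block_of e)) (w_out w2 (block_of e))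
  (dhidden L.-1 w1 x e (block_of e) o) (dhidden L.-1 w2 x e (block_of e) o).
have h2 : `|w_out w1 (block_of e) - w_out w2 (block_of e)|
          * `|dhidden L.-1 w1 x e (block_of e) o| <= delta * (C * P).
  by rewrite ler_pM ?(norm_dhidden_le ha hB hx hw1) //; apply: hw.
have h3 : `|w_out w2 (block_of e)|
          * `|dhidden L.-1 w1 x e (block_of e) o - dhidden L.-1 w2 x e (block_of e) o|
          <= gamma * (E * P ^+ 2 * delta).
  by rewrite -exprM mulnC ler_pM ?(dist_dhidden_le ha hB hdelta hx hw hw1 hw2).
have h4 : `|(hidden L.-1 w1 x (block_of e) o - hidden L.-1 w2 x (block_of e) o)
            * dw_out e (block_of e)| <= C * P * delta.
  by rewrite mulrC norm_mul_le1l ?norm_bool_le1 ?(dist_hidden_le ha hB hdelta hx hw hw2).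
have h5 : C * P * delta <= C * (gamma * P ^+ 2) * delta.
  by rewrite ler_wpM2r // ler_wpM2l // expr2 mulrA ler_peMl ?gammaP1 // (le_trans ler01 P1).
have h6 : delta * (C * P) = C * P * delta by ring.
by move: h1 h2 h3 h4 h5; rewrite h6 /=; lra.
Qed.

End NetworkBounds.

Section GradientBound.
Variables (R : realType) (d L r K n : nat) (hr : (0 < r)%N) (a B gamma delta beta : R).
Local Notation C := (Cm d r a L.-1).
Local Notation E := (Em d r a L.-1).
Local Notation P := (B ^+ L.-1).
Hypotheses (ha : 1 <= a) (hB : 1 <= B) (hgamma : 1 <= gamma) (hdelta : 0 <= delta).
Variables (X : 'I_n -> 'I_d -> R) (Y : 'I_n -> R) (w1 w2 : widx d L r K -> R).
Hypotheses (hn : (0 < n)%N) (hX : forall i j, `|X i j| <= a)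
  (hY : forall i, `|Y i| <= beta) (hbeta : beta <= K%:R * gamma)
  (hw : forall e, `|w1 e - w2 e| <= delta)
  (hw1 : forall l k i j, `|w_mid w1 l k i j| <= B)
  (hw2 : forall l k i j, `|w_mid w2 l k i j| <= B)
  (ho1 : forall k, `|w_out w1 k| <= gamma)
  (ho2 : forall k, `|w_out w2 k| <= gamma).

Lemma dist_grad_risk_le e :
  `|grad_risk hr X Y w1 e - grad_risk hr X Y w2 e|
    <= (2 * (1 + C) ^+ 2 + 4 * (2 * C + E)) * K%:R * gamma ^+ 2 * P ^+ 2 * delta.
Proof.
apply: dist_mean_le => // i; rewrite -mulrBr normrM ger0_norm //.
set res1 := net hr w1 (X i) - Y i; set res2 := net hr w2 (X i) - Y i.
have hres : `|res1 - res2| <= K%:R * ((1 + C) * gamma * P * delta).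
  by rewrite opprB addrA subrK (dist_net_le hr ha hB hgamma hdelta (hX i)).
have hres2 : `|res2| <= 2 * K%:R * gamma.
  apply: le_trans (ler_normB _ _) _; have := norm_net_le hr (X i) ho2.
  by have := hY i; move: hbeta; lra.
have hdn1 := norm_dnet_le hr ha hB hgamma (hX i) hw1 ho1 e.
have hdn := dist_dnet_le hr ha hB hgamma hdelta (hX i) hw hw1 hw2 ho2 e.
apply: le_trans (ler_wpM2l _ (dist_mul_le _ _ _ _)) _ => //.
rewrite [X in _ <= X](_ : _ = 2 * (K%:R * ((1 + C) * gamma * P * delta) * ((1 + C) * gamma * P)
    + 2 * K%:R * gamma * ((2 * C + E) * gamma * P ^+ 2 * delta))); last by ring.
by rewrite ler_wpM2l // lerD // ler_pM.
Qed.

End GradientBound.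

Section EuclideanNorm.
Variables (R : realType) (T : finType).
Implicit Types v : T -> R.

Lemma norm_le_enorm v e : `|v e| <= enorm v.
Proof.
have sq0 e' : 0 <= v e' ^+ 2 by rewrite sqr_ge0.
rewrite /enorm -sqrtr_sqr ler_sqrt ?sumr_ge0 //.
by rewrite (bigD1 e) //= lerDl sumr_ge0.
Qed.

Lemma enorm_le v c : 0 <= c -> (forall e, `|v e| <= c) ->
  enorm v <= Num.sqrt #|T|%:R * c.
Proof.
move=> c0 vc; rewrite /enorm -(ger0_norm c0) -sqrtr_sqr -sqrtrM // ler_sqrt.
  have vc2 e : v e ^+ 2 <= c ^+ 2 by rewrite -real_normK ?num_real // lerXn2r ?nnegrE.
  by apply: le_trans (ler_sum _ (fun e _ => vc2 e)) _; rewrite sumr_const mulr_natl.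
by rewrite mulr_ge0 ?sqr_ge0.
Qed.

End EuclideanNorm.

Lemma card_widx d L r K :
  #|widx d L r K| = (K * (r * d.+1 + L.-1 * r * r.+1 + 1))%N.
Proof. by rewrite !card_sum !card_prod !card_ord; ring. Qed.

Lemma powR_three_halves (R : realType) (x : R) : 0 <= x ->
  x `^ (3%:R / 2%:R) = x * Num.sqrt x.
Proof.
move=> x0; have -> : (3%:R / 2%:R : R) = 1 + 2^-1 by field.
by rewrite powRD ?powRr1 ?powR12_sqrt // gt_eqF ?orbT // ltr_wpDr.
Qed.

Theorem lemma5 (R : realType) (d L r : nat) (a : R) :
  (1 <= L)%N -> forall hr : (0 < r)%N, 1 <= a ->
  exists c15 : R, 0 < c15 /\
  forall (K n : nat) (beta gamma B : R)
         (X : 'I_n -> 'I_d -> R) (Y : 'I_n -> R)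
         (w1 w2 : widx d L r K -> R),
    (1 <= n)%N -> 0 < beta -> 1 <= gamma -> 1 <= B ->
    (forall i j, `|X i j| <= a) ->
    (forall i, `|Y i| <= beta) ->
    beta <= K%:R * gamma ->
    (forall k, Num.max `|w_out w1 k| `|w_out w2 k| <= gamma) ->
    (forall l k i j, Num.max `|w_mid w1 l k i j| `|w_mid w2 l k i j| <= B) ->
    enorm (fun e => grad (risk hr X Y) w1 e - grad (risk hr X Y) w2 e)
      <= c15 * (K%:R `^ (3%:R / 2%:R)) * B ^+ (2 * L) * gamma ^+ 2
             * enorm (fun e => w1 e - w2 e).
Proof.
move=> _ hr ha.
pose C := Cm d r a L.-1; pose E := Em d r a L.-1.
pose Q := 2 * (1 + C) ^+ 2 + 4 * (2 * C + E).
have Q_gt0 : 0 < Q.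
  by rewrite /Q /C /E; have := Cm_ge0 d r ha L.-1; have := Em_ge0 d r ha L.-1; nra.
exists (Num.sqrt (r * d.+1 + L.-1 * r * r.+1 + 1)%N%:R * Q).
split; first by rewrite mulr_gt0 // sqrtr_gt0 ltr0n addn1.
move=> K n beta gamma B X Y w1 w2 hn _ hgamma hB hX hY hbeta ho hm.
have [ho1 ho2] : (forall k, `|w_out w1 k| <= gamma) /\ (forall k, `|w_out w2 k| <= gamma).
  split=> k; by have := ho k; rewrite ge_max => /andP[].
have [hm1 hm2] : (forall l k i j, `|w_mid w1 l k i j| <= B) /\
                 (forall l k i j, `|w_mid w2 l k i j| <= B).
  split=> l k i j; by have := hm l k i j; rewrite ge_max => /andP[].
set delta := enorm (fun e => w1 e - w2 e).
have hw e : `|w1 e - w2 e| <= delta := norm_le_enorm (fun e => w1 e - w2 e) e.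
have delta0 : 0 <= delta by apply: sqrtr_ge0.
have gamma0 : 0 <= gamma by apply: le_trans hgamma.
have B0 : 0 <= B by apply: le_trans hB.
apply: le_trans (enorm_le (c := Q * K%:R * gamma ^+ 2 * B ^+ (2 * L) * delta) _ _) _.
- by rewrite !mulr_ge0 ?exprn_ge0 // ltW.
- move=> e; rewrite !gradE.
  apply: le_trans (dist_grad_risk_le hr ha hB hgamma delta0 hn hX hY hbeta hw hm1 hm2 ho1 ho2 e) _.
  rewrite ler_wpM2r // ler_wpM2l ?mulr_ge0 ?(ltW Q_gt0) // -exprM mulnC ler_weXn2l //.
  by rewrite leq_mul2l leq_pred orbT.
- by rewrite card_widx natrM sqrtrM // powR_three_halves //; lra.
Qed.
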